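(* Let $W$ be a finite set of possible worlds and let $G=(2^W,\gg)$ and $G'=(2^W,\gg')$ be complete belief algebras on $W$. Then: (1) $\operatorname{Gen}(\Omega)=G$, where $\Omega=\{(\{\omega\},\{\omega'\})\mid \omega,\omega'\in W,\ \{\omega\}\gg\{\omega'\}\}$; (2) if for all $\omega,\omega'\in W$ we have $(\{\omega\},\{\omega'\})\in G$ iff $(\{\omega\},\{\omega'\})\in G'$, then $G=G'$.
   Context: $R_W=\{(U,V)\mid U,V\subseteq W,\ U\cap V=\varnothing\}$. A belief algebra on $W$ is a pair $(2^W,\gg)$, $\gg$ a binary relation on $2^W$, such that for all $U,V,U_1,V_1,U_2,V_2\subseteq W$: (A0) $\gg\subseteq R_W$; (A1) $U\gg\varnothing$ iff $U\neq\varnothing$; (A2) if $U\gg V$ then not $V\gg U$; (A3) if $U_1\supseteq U$, $U\gg V$, $V\supseteq V_1$ and $U_1\cap V_1=\varnothing$, then $U_1\gg V_1$; (A4) if $U=U_1\cup V_1=U_2\cup V_2$, $U_1\gg V_1$ and $U_2\gg V_2$, then $U_1\cap U_2\gg V_1\cup V_2$. A belief algebra is identified with its relation as a set of pairs. A complete belief algebra (CBA) is a belief algebra of the form $U\gg V$ iff $U\cap V=\varnothing$ and there is $\omega_1\in U$ with $\omega_1\prec\omega_2$ for all $\omega_2\in V$, for some total preorder $\preceq$ on $W$ (where $\omega\prec\omega'$ iff $\omega\preceq\omega'$ and not $\omega'\preceq\omega$). For $\Omega\subseteq R_W$, $\operatorname{Gen}(\Omega)$ is the smallest subset of $R_W$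 that contains $\Omega$, contains $(U,\varnothing)$ for every nonempty $U\subseteq W$, and is closed under: if $(U,V)$ is in it, $U\subseteq U_1$, $V_1\subseteq V$ and $U_1\cap V_1=\varnothing$, then $(U_1,V_1)$ is in it; if $U_1\cup V_1=U_2\cup V_2$ and $(U_1,V_1),(U_2,V_2)$ are in it, then $(U_1\cap U_2,V_1\cup V_2)$ is in it. *)

From mathcomp Require Import all_boot.
Set Implicit Arguments. Unset Strict Implicit. Unset Printing Implicit Defensive.

(* A binary relation on 2^W, identified with the set of pairs it relates. *)
Definition brel (W : finType) := {set W} -> {set W} -> Prop.

Definition belief_algebra (W : finType) (G : brel W) : Prop :=
  (forall U V : {set W}, G U V -> [disjoint U & V]) /\
  (forall U : {set W}, G U set0 <-> U != set0) /\
  (forall U V : {set W}, G U V -> ~ G V U) /\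
  (forall U V U1 V1 : {set W}, U \subset U1 -> G U V -> V1 \subset V ->
              [disjoint U1 & V1] -> G U1 V1) /\
  (forall U U1 V1 U2 V2 : {set W}, U = U1 :|: V1 -> U = U2 :|: V2 ->
              G U1 V1 -> G U2 V2 -> G (U1 :&: U2) (V1 :|: V2)).

Definition total_preorder (W : finType) (le : W -> W -> Prop) : Prop :=
  (forall x, le x x) /\ (forall x y z, le x y -> le y z -> le x z) /\
  (forall x y, le x y \/ le y x).

Definition strict (W : finType) (le : W -> W -> Prop) (x y : W) : Prop :=
  le x y /\ ~ le y x.

Definition complete_belief_algebra (W : finType) (G : brel W) : Prop :=
  belief_algebra G /\
  exists le : W -> W -> Prop, total_preorder le /\
    forall U V : {set W}, G U V <->
      ([disjoint U & V] /\
       exists w1, w1 \in U /\ forall w2, w2 \in V -> strict le w1 w2).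

Inductive Gen (W : finType) (Om : brel W) : {set W} -> {set W} -> Prop :=
| Gen_base (U V : {set W}) : Om U V -> Gen Om U V
| Gen_empty (U : {set W}) : U != set0 -> Gen Om U set0
| Gen_weaken (U V U1 V1 : {set W}) : Gen Om U V -> U \subset U1 -> V1 \subset V ->
    [disjoint U1 & V1] -> Gen Om U1 V1
| Gen_meet (U1 V1 U2 V2 : {set W}) : U1 :|: V1 = U2 :|: V2 -> Gen Om U1 V1 -> Gen Om U2 V2 ->
    Gen Om (U1 :&: U2) (V1 :|: V2).

Definition singleton_part (W : finType) (G : brel W) : brel W :=
  fun U V => exists w w' : W, U = [set w] /\ V = [set w'] /\ G [set w] [set w'].

(* A complete belief algebra G is determined by its singleton comparisons:
   if U >> V, some w in U is strictly below every v in V, so {w} >> {v} for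
   each v in V.  The rule of intersection joins these into {w} >> V (weaken
   both sides to a common union U u V1 u V2 first), and weakening gives
   U >> V.  Conversely every rule defining Gen is an axiom of belief algebras,
   so Gen of the singleton part never leaves G. *)
From Stdlib Require Import FunctionalExtensionality PropExtensionality.
From mathcomp Require Import all_boot.

Set Implicit Arguments.
Unset Strict Implicit.
Unset Printing Implicit Defensive.

Lemma setDUK_subset (T : finType) (A B : {set T}) :
  B \subset A -> (A :\: B) :|: B = A.
Proof.
by move=> sBA; rewrite setDE setUIl [~: B :|: B]setUC setUCr setIT; apply/setUidPl.
Qed.

Lemma disjoint_setDl (T : finType) (A B : {set T}) : [disjoint A :\: B & B].
Proof. by rewrite disjoints_subset setDE subsetIr. Qed.

Lemma disjoint_setUr (T : finType) (A B C : {set T}) :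
  [disjoint A & B :|: C] = [disjoint A & B] && [disjoint A & C].
Proof. by rewrite !disjoints_subset setCU subsetI. Qed.

Lemma bigcup_set1 (T : finType) (A : {set T}) : \bigcup_(x in A) [set x] = A.
Proof.
apply/setP => x; apply/bigcupP/idP => [[y yA /set1P -> //] | xA].
by exists x; rewrite ?set11.
Qed.

Section GenRules.

Variables (W : finType) (Om : brel W).

Lemma Gen_joinr (U V1 V2 : {set W}) : [disjoint U & V1 :|: V2] ->
  Gen Om U V1 -> Gen Om U V2 -> Gen Om U (V1 :|: V2).
Proof.
rewrite disjoint_setUr => /andP [dV1 dV2].
move=> gV1 gV2; set A := U :|: V1 :|: V2.
have sUA : U \subset A by rewrite /A -setUA subsetUl.
have sV1A : V1 \subset A by rewrite /A -setUA subsetU // subsetUl orbT.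
have sV2A : V2 \subset A by rewrite subsetUr.
have sUA1 : U \subset A :\: V1 by rewrite subsetD sUA.
have sUA2 : U \subset A :\: V2 by rewrite subsetD sUA.
have gA1 := Gen_weaken gV1 sUA1 (subxx _) (disjoint_setDl A V1).
have gA2 := Gen_weaken gV2 sUA2 (subxx _) (disjoint_setDl A V2).
have eA : (A :\: V1) :|: V1 = (A :\: V2) :|: V2 by rewrite !setDUK_subset.
(* The meet lands on (A :\: V1) :&: (A :\: V2) = A :\: (V1 :|: V2), which is U. *)
apply: Gen_weaken (Gen_meet eA gA1 gA2) _ (subxx _) _.
- by rewrite -setDUr /A -setUA setDUl setDv setU0 subsetDl.
- by rewrite disjoint_setUr dV1.
Qed.

Lemma Gen_of_set1r (U V : {set W}) : U != set0 -> [disjoint U & V] ->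
  (forall v, v \in V -> Gen Om U [set v]) -> Gen Om U V.
Proof.
move=> U0 dUV gUv; rewrite -(bigcup_set1 V).
suff [] : [disjoint U & \bigcup_(v in V) [set v]] /\ Gen Om U (\bigcup_(v in V) [set v])
  by [].
apply: (big_ind (fun X : {set W} => [disjoint U & X] /\ Gen Om U X)).
- by split; [rewrite disjoints_subset setC0 subsetT | exact: Gen_empty].
- move=> X Y [dUX gUX] [dUY gUY].
  have dUXY : [disjoint U & X :|: Y] by rewrite disjoint_setUr dUX.
  by split; last exact: Gen_joinr.
- move=> v vV; split; last exact: gUv.
  by rewrite disjoint_sym disjoints1 (disjointFl dUV).
Qed.

Lemma Gen_sound (G : brel W) : belief_algebra G ->
  (forall U V, Om U V -> G U V) -> forall U V, Gen Om U V -> G U V.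
Proof.
move=> [_ [A1 [_ [A3 A4]]]] OmG U V; elim=> {U V}.
- exact: OmG.
- by move=> U /A1.
- by move=> U V U1 V1 _ gUV sUU1 sV1V; apply: A3 sUU1 gUV sV1V.
- by move=> U1 V1 U2 V2 e _ g1 _ g2; apply: (A4 (U1 :|: V1)).
Qed.

End GenRules.

Lemma cba_set1_witness (W : finType) (G : brel W) (U V : {set W}) :
  complete_belief_algebra G -> G U V ->
  exists2 w, w \in U & forall v, v \in V -> G [set w] [set v].
Proof.
move=> [_ [le [_ HG]]] /HG [_ [w [wU lt_wV]]]; exists w => // v vV.
have [le_wv nle_vw] := lt_wV v vV.
apply/HG; split; last by exists w; split=> [|_ /set1P ->]; rewrite ?set11.
by rewrite disjoints1 inE; apply/eqP => ewv; apply: nle_vw; rewrite -ewv in le_wv *.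
Qed.

Lemma Gen_singleton_part (W : finType) (G : brel W) :
  complete_belief_algebra G -> Gen (singleton_part G) = G.
Proof.
move=> cG; have [bG _] := cG.
apply: functional_extensionality => U; apply: functional_extensionality => V.
apply: propositional_extensionality; split.
  by apply: Gen_sound bG _ U V => _ _ [w [w' [-> [-> gww']]]].
move=> gUV; have [w wU gwV] := cba_set1_witness cG gUV.
have dUV : [disjoint U & V] := bG.1 U V gUV.
have dwV : [disjoint [set w] & V] by rewrite disjoints1 (disjointFr dUV wU).
apply: Gen_weaken (Gen_of_set1r _ dwV _) _ (subxx _) dUV.
- by apply/set0Pn; exists w; rewrite set11.
- by move=> v vV; apply: Gen_base; exists w, v; do 2 split=> //; apply: gwV.
- by rewrite sub1set.
Qed.

Lemma eq_singleton_part (W : finType) (G G' : brel W) :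
  (forall w w' : W, G [set w] [set w'] <-> G' [set w] [set w']) ->
  singleton_part G = singleton_part G'.
Proof.
move=> eqG; apply: functional_extensionality => U.
apply: functional_extensionality => V; apply: propositional_extensionality.
by split=> -[w [w' [-> [-> g]]]]; exists w, w'; do 2 split=> //; apply/eqG.
Qed.

Theorem corollary1 (W : finType) (G G' : brel W) :
  complete_belief_algebra G -> complete_belief_algebra G' ->
  Gen (singleton_part G) = G /\
  ((forall w w' : W, G [set w] [set w'] <-> G' [set w] [set w']) -> G = G').
Proof.
move=> cG cG'; split; first exact: Gen_singleton_part.
move=> eqG; rewrite -(Gen_singleton_part cG) -(Gen_singleton_part cG').
by rewrite (eq_singleton_part eqG).
Qed.
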